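(* A matroid is binary if and only if it is a BULMAC matroid, i.e., if and only if it is isomorphic to the matroid on $E_m=\{1,\dots,m\}$ with rank function $S\mapsto I(X[S];Y,X[S^c])$ for some linear deterministic binary MAC $W$ (that is, $Y=AX[E_m]$ for some matrix $A$ over $\mathbb{F}_2$ with $m$ columns).
   Context: A binary MAC with $m$ users is a channel $W$ with input alphabet $\mathbb{F}_2^m$ and finite output alphabet. Let $X[E_m]$ have i.i.d. uniform components on $\mathbb{F}_2$ and let $Y$ be the output of $W$ with input $X[E_m]$; for $S\subseteq E_m$, $X[S]=(X[i])_{i\in S}$, $S^c=E_m\setminus S$. Mutual information is in bits. A linear deterministic binary MAC is one with $W(y\mid x)=1$ if $y=Ax$ and $0$ otherwise, for a fixed matrix $A$ over $\mathbb{F}_2$. A matroid is binary if it is isomorphic to the vector matroid of a matrix over $\mathbb{F}_2$. *)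

From Stdlib Require Import Reals.
From mathcomp Require Import all_boot all_algebra.

Set Implicit Arguments.
Unset Strict Implicit.
Unset Printing Implicit Defensive.

Definition is_matroid_rank (T : finType) (r : {set T} -> nat) : Prop :=
  [/\ (forall X : {set T}, r X <= #|X|)%N,
      (forall X Y : {set T}, X \subset Y -> r X <= r Y)%N &
      (forall X Y : {set T}, r (X :|: Y) + r (X :&: Y) <= r X + r Y)%N].

(* Vector matroid of a matrix B over F_2 on its column index set 'I_n:
   rank of S = dimension of the span of the columns indexed by S
   (= rank of B with the columns outside S replaced by zero). *)
Local Open Scope ring_scope.
Definition vec_rank (k n : nat) (B : 'M['F_2]_(k, n)) (S : {set 'I_n}) : nat :=
  \rank (\matrix_(i < k, j < n) (if j \in S then B i j else 0)).
Local Close Scope ring_scope.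

Definition binary_matroid (T : finType) (r : {set T} -> nat) : Prop :=
  exists (k n : nat) (B : 'M['F_2]_(k, n)) (f : T -> 'I_n),
    bijective f /\ forall X : {set T}, r X = vec_rank B (f @: X).

Local Open Scope R_scope.

Definition log2 (x : R) : R := ln x / ln 2.

Definition law (Om V : finType) (g : Om -> V) (v : V) : R :=
  INR #|[set w | g w == v]| / INR #|Om|.

(* Shannon entropy in bits; terms with zero probability contribute
   0 * log2 0 = 0 (convention 0 log 0 = 0). *)
Definition entropy (Om V : finType) (g : Om -> V) : R :=
  - \big[Rplus/0]_(v : V) (law g v * log2 (law g v)).

Definition minfo (Om V1 V2 : finType) (g1 : Om -> V1) (g2 : Om -> V2) : R :=
  entropy g1 + entropy g2 - entropy (fun w => (g1 w, g2 w)).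

(* X[E_m] : the input vector (uniform on F_2^m, i.e. i.i.d. uniform bits). 
   X[S] : the sub-vector indexed by S, encoded injectively as a finite function
   returning None outside S. *)
Definition restr (m : nat) (S : {set 'I_m}) (x : 'cV['F_2]_m) : {ffun 'I_m -> option 'F_2} :=
  [ffun i => if i \in S then Some (x i ord0) else None].

Definition bulmac_rank (k m : nat) (A : 'M['F_2]_(k, m)) (S : {set 'I_m}) : R :=
  minfo (restr S) (fun x : 'cV['F_2]_m => ((A *m x)%R, restr (~: S) x)).

Definition bulmac_matroid (T : finType) (r : {set T} -> nat) : Prop :=
  exists (k m : nat) (A : 'M['F_2]_(k, m)) (f : T -> 'I_m),
    bijective f /\ forall X : {set T}, INR (r X) = bulmac_rank A (f @: X).

From Stdlib Require Import Reals Lra.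
From mathcomp Require Import all_boot all_algebra.

Set Implicit Arguments.
Unset Strict Implicit.
Unset Printing Implicit Defensive.

Import GRing.Theory.

(* Under the uniform input, a map whose fibers are the cosets of a subgroup K
   takes #|G| / #|K| equiprobable values. For Y = A X the three maps in
   I(X[S]; Y, X[S^c]) have as kernels the vectors vanishing on S, the vectors of
   ker A vanishing off S, and {0}; the first two together form the kernel of A
   with the columns outside S zeroed, of size 2^(m - rank). So the rank function
   of the channel Y = A X is that of the vector matroid of A, and either kind of
   representation of r is the other one with the same matrix and bijection. *)

Local Open Scope R_scope.

Lemma log2_mult (x y : R) : 0 < x -> 0 < y -> log2 (x * y) = log2 x + log2 y.
Proof. by move=> x_gt0 y_gt0; rewrite /log2 ln_mult //; field; apply: ln_neq_0; lra. Qed.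

Lemma log2_1 : log2 1 = 0.
Proof. by rewrite /log2 ln_1 /Rdiv Rmult_0_l. Qed.

Lemma log2_div (x y : R) : 0 < x -> 0 < y -> log2 (x / y) = log2 x - log2 y.
Proof.
move=> x_gt0 y_gt0; rewrite {1}/Rdiv log2_mult //; last exact: Rinv_0_lt_compat.
by rewrite /log2 ln_Rinv // /Rdiv; ring.
Qed.

Lemma INR_expn (a n : nat) : INR (a ^ n) = INR a ^ n.
Proof. by elim: n => // n IH; rewrite expnS mult_INR IH. Qed.

Lemma INR_expn2_gt0 (n : nat) : 0 < INR (2 ^ n).
Proof. by apply: lt_0_INR; apply/ltP; rewrite expn_gt0. Qed.

Lemma log2_expn2 (n : nat) : log2 (INR (2 ^ n)) = INR n.
Proof.
rewrite INR_expn /log2 ln_pow /=; last lra.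
by rewrite (_ : 1 + 1 = 2); [field; apply: ln_neq_0 | ring]; lra.
Qed.

Lemma INR_card_gt0 (T : finType) (X : {pred T}) (x : T) : x \in X -> 0 < INR #|X|.
Proof. by move=> Xx; apply: lt_0_INR; apply/ltP/card_gt0P; exists x. Qed.

Lemma INR_big_sum (I : finType) (f : I -> nat) :
  INR (\sum_(i : I) f i)%N = \big[Rplus/0]_(i : I) INR (f i).
Proof. by elim/big_rec2: _ => // i _ s _ <-; rewrite plus_INR. Qed.

Lemma big_sum_mulr (I : finType) (f : I -> R) (c : R) :
  \big[Rplus/0]_(i : I) (f i * c) = (\big[Rplus/0]_(i : I) f i) * c.
Proof. by elim/big_rec2: _ => [|i s t _ ->]; ring. Qed.

Lemma sum_card_fibers (Om V : finType) (g : Om -> V) :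
  (\sum_(v : V) #|[set w | g w == v]|)%N = #|Om|.
Proof.
rewrite -sum1_card (partition_big g predT) //=.
by apply: eq_bigr => v _; rewrite -sum1_card; apply: eq_bigl => w; rewrite inE.
Qed.

Lemma sum_law (Om V : finType) (g : Om -> V) (w0 : Om) :
  \big[Rplus/0]_(v : V) law g v = 1.
Proof.
rewrite /law /Rdiv big_sum_mulr -INR_big_sum sum_card_fibers.
by apply: Rinv_r; apply: Rgt_not_eq; apply: (@INR_card_gt0 _ _ w0).
Qed.

Lemma entropy_equal_fibers (Om V : finType) (g : Om -> V) (c : nat) (w0 : Om) :
  (forall w, #|[set w' | g w' == g w]| = c) ->
  entropy g = log2 (INR #|Om| / INR c).
Proof.
move=> fiber_c.
have c_gt0 : 0 < INR c by rewrite -(fiber_c w0); apply: (@INR_card_gt0 _ _ w0); rewrite inE.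
have N_gt0 : 0 < INR #|Om| by apply: (@INR_card_gt0 _ _ w0).
rewrite /entropy (eq_bigr (fun v => law g v * log2 (INR c / INR #|Om|))).
  by rewrite big_sum_mulr (sum_law g w0) !log2_div //; ring.
move=> v _; rewrite /law; case: (pickP (fun w => g w == v)) => [w /eqP <- | no_w].
  by rewrite fiber_c.
have -> : #|[set w | g w == v]| = 0%N by apply: eq_card0 => w; rewrite inE no_w.
by rewrite /Rdiv !Rmult_0_l.
Qed.

Local Close Scope R_scope.
Local Open Scope ring_scope.

Lemma card_fiber_coset (G : finZmodType) (V : finType) (g : G -> V) (K : {set G}) :
  (forall x y, (g x == g y) = (x - y \in K)) ->
  forall x, #|[set w | g w == g x]| = #|K|.
Proof.
move=> gK x; rewrite -(card_preimset K (can_inj (subrK x))).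
by apply: eq_card => w; rewrite !inE gK.
Qed.

Lemma entropy_coset_fibers (G : finZmodType) (V : finType) (g : G -> V) (K : {set G}) :
  (forall x y, (g x == g y) = (x - y \in K)) ->
  entropy g = log2 (INR #|G| / INR #|K|).
Proof. by move=> gK; apply: (entropy_equal_fibers 0); apply: card_fiber_coset. Qed.

Section Masks.

Variables (R : pzRingType) (m : nat).
Implicit Types (S : {set 'I_m}) (z : 'cV[R]_m).

Definition mask_col S z : 'cV[R]_m := \col_i (if i \in S then z i ord0 else 0).

Definition mask_cols k S (A : 'M[R]_(k, m)) : 'M[R]_(k, m) :=
  \matrix_(i, j) (if j \in S then A i j else 0).

Lemma mask_col0 S : mask_col S 0 = 0.
Proof. by apply/matrixP => i j; rewrite !mxE; case: ifP. Qed.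

Lemma mask_colD S x y : mask_col S (x + y) = mask_col S x + mask_col S y.
Proof. by apply/matrixP => i j; rewrite !mxE; case: ifP; rewrite ?addr0. Qed.

Lemma mask_colB S x y : mask_col S (x - y) = mask_col S x - mask_col S y.
Proof. by apply/matrixP => i j; rewrite !mxE; case: ifP; rewrite ?subr0. Qed.

Lemma mask_colC S z : mask_col S z + mask_col (~: S) z = z.
Proof.
apply/matrixP => i j; rewrite !mxE inE (ord1 j).
by case: (i \in S); rewrite ?addr0 ?add0r.
Qed.

Lemma mask_colCK S z : mask_col (~: S) (mask_col S z) = 0.
Proof. by apply/matrixP => i j; rewrite !mxE inE; case: (i \in S). Qed.

Lemma mask_colKC S z : mask_col S (mask_col (~: S) z) = 0.
Proof. by rewrite -{1}[S]setCK mask_colCK. Qed.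

Lemma mask_col_eq0C S z : mask_col S z = 0 -> mask_col (~: S) z = z.
Proof. by move=> Sz0; rewrite -{2}(mask_colC S z) Sz0 add0r. Qed.

Lemma mask_col_eq0 S z : mask_col S z = 0 -> mask_col (~: S) z = 0 -> z = 0.
Proof. by move=> Sz0 Cz0; rewrite -(mask_colC S z) Sz0 Cz0 addr0. Qed.

Lemma mul_mask_cols k S (A : 'M[R]_(k, m)) z :
  mask_cols S A *m z = A *m mask_col S z.
Proof.
apply/matrixP => i j; rewrite !mxE; apply: eq_bigr => l _.
by rewrite !mxE (ord1 j); case: (l \in S); rewrite ?mul0r ?mulr0.
Qed.

End Masks.

Section FiniteKernels.

Variable F : finFieldType.

Definition mx_kernel k m (C : 'M[F]_(k, m)) : {set 'cV[F]_m} := [set z | C *m z == 0].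

Definition vanishing_on m (S : {set 'I_m}) : {set 'cV[F]_m} := [set z | mask_col S z == 0].

Lemma in_mx_kernel k m (C : 'M[F]_(k, m)) z : (z \in mx_kernel C) = (C *m z == 0).
Proof. by rewrite inE. Qed.

Lemma in_vanishing_on m (S : {set 'I_m}) z : (z \in vanishing_on S) = (mask_col S z == 0).
Proof. by rewrite inE. Qed.

Lemma mx_kernel0 k m (C : 'M[F]_(k, m)) : 0 \in mx_kernel C.
Proof. by rewrite in_mx_kernel mulmx0. Qed.

Lemma vanishing_on0 m (S : {set 'I_m}) : 0 \in vanishing_on S.
Proof. by rewrite in_vanishing_on mask_col0. Qed.

Lemma card_row_space (m n : nat) (B : 'M[F]_(m, n)) :
  #|[set v : 'rV[F]_n | (v <= B)%MS]| = (#|F| ^ \rank B)%N.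
Proof.
have -> : (#|F| ^ \rank B)%N = #|{: 'rV[F]_(\rank B)}| by rewrite card_mx mul1n.
have inj_base : injective (@mulmxr _ 1 _ _ (row_base B)).
  have /row_freeP[B' B'K] := row_base_free B.
  by apply: (can_inj (g := mulmxr B')) => u; rewrite /= -mulmxA B'K mulmx1.
rewrite -(card_image inj_base); apply: eq_card => v.
by rewrite inE -(eq_row_base B) (sameP submxP codomP).
Qed.

Lemma card_mx_kernel (k m : nat) (C : 'M[F]_(k, m)) :
  #|mx_kernel C| = (#|F| ^ (m - \rank C))%N.
Proof.
rewrite -(mxrank_tr C) -mxrank_ker -card_row_space.
have -> : [set v : 'rV[F]_m | (v <= kermx C^T)%MS] = [set z^T | z in mx_kernel C].
  apply/setP => v; rewrite inE sub_kermx; apply/idP/imsetP.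
    by move=> vC0; exists v^T; rewrite ?trmxK // inE -(inj_eq (@trmx_inj _ _ _)) trmx_mul trmxK trmx0.
  by move=> [z]; rewrite inE => /eqP Cz0 ->; rewrite -trmx_mul Cz0 trmx0.
by rewrite card_imset //; apply: trmx_inj.
Qed.

(* A vector killed by the masked matrix splits into its part off [S], which is
   unconstrained, and its part on [S], which lies in the kernel of [A]. *)
Lemma card_mx_kernel_mask_cols (k m : nat) (A : 'M[F]_(k, m)) (S : {set 'I_m}) :
  #|mx_kernel (mask_cols S A)| =
  (#|vanishing_on S| * #|mx_kernel A :&: vanishing_on (~: S)|)%N.
Proof.
rewrite -cardsX.
pose parts (z : 'cV[F]_m) := (mask_col (~: S) z, mask_col S z).
have parts_inj : injective parts.
  by move=> x y [eCx eSx]; rewrite -(mask_colC S x) -(mask_colC S y) eCx eSx.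
rewrite -(card_imset _ parts_inj); congr #|pred_of_set _|; apply/setP => -[a b].
rewrite !inE /=; apply/imsetP/andP.
  move=> [z]; rewrite inE mul_mask_cols => /eqP Az0 [-> ->].
  by rewrite mask_colKC Az0 mask_colCK !eqxx.
move=> [/eqP Sa0 /andP[/eqP Ab0 /eqP Cb0]].
have Sb : mask_col S b = b by have := mask_col_eq0C Cb0; rewrite setCK.
exists (a + b); first by rewrite inE mul_mask_cols mask_colD Sa0 add0r Sb Ab0.
by rewrite /parts !mask_colD mask_col_eq0C // Cb0 addr0 Sa0 add0r Sb.
Qed.

End FiniteKernels.

Arguments vanishing_on {F m} S.
Arguments vanishing_on0 {F m} S.

Lemma restr_eq_mask (m : nat) (S : {set 'I_m}) (x y : 'cV['F_2]_m) :
  (restr S x == restr S y) = (x - y \in vanishing_on S).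
Proof.
rewrite inE mask_colB subr_eq0; apply/eqP/eqP => [e | e].
  apply/matrixP => i j; rewrite !mxE; case: ifP => // iS.
  by move/ffunP/(_ i): e; rewrite !ffunE iS => -[].
apply/ffunP => i; rewrite !ffunE; case: ifP => // iS.
by move/matrixP/(_ i ord0): e; rewrite !mxE iS => ->.
Qed.

Lemma card_cV_F2 (m : nat) : #|{: 'cV['F_2]_m}| = (2 ^ m)%N.
Proof. by rewrite card_mx card_Fp // muln1. Qed.

Local Open Scope R_scope.

Lemma log2_card_kernel_parts (k m : nat) (A : 'M['F_2]_(k, m)) (S : {set 'I_m}) :
  log2 (INR #|@vanishing_on 'F_2 m S|) + log2 (INR #|mx_kernel A :&: vanishing_on (~: S)|) =
  INR m - INR (vec_rank A S).
Proof.
have kernel0 := introT setIP (conj (mx_kernel0 A) (vanishing_on0 (~: S))).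
rewrite -log2_mult; last exact: INR_card_gt0 kernel0; last exact: INR_card_gt0 (vanishing_on0 S).
rewrite -mult_INR multE -card_mx_kernel_mask_cols card_mx_kernel card_Fp // log2_expn2.
by rewrite minus_INR //; apply/leP/rank_leq_col.
Qed.

Local Close Scope R_scope.

Lemma bulmac_rank_vec_rank (k m : nat) (A : 'M['F_2]_(k, m)) (S : {set 'I_m}) :
  bulmac_rank A S = INR (vec_rank A S).
Proof.
rewrite /bulmac_rank /minfo.
rewrite (entropy_coset_fibers (K := vanishing_on S)); last first.
  by move=> x y; rewrite restr_eq_mask.
rewrite (entropy_coset_fibers (K := mx_kernel A :&: vanishing_on (~: S))); last first.
  by move=> x y; rewrite xpair_eqE restr_eq_mask in_setI in_mx_kernel mulmxBr subr_eq0.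
rewrite (entropy_coset_fibers (K := [set 0 : 'cV['F_2]_m])); last first.
  move=> x y; rewrite !xpair_eqE !restr_eq_mask !in_vanishing_on in_set1.
  rewrite -[A *m x == _]subr_eq0 -mulmxBr.
  apply/idP/eqP => [/and3P[/eqP S0 _ /eqP C0] | ->]; first exact: mask_col_eq0 S0 C0.
  by rewrite !mask_col0 mulmx0 !eqxx.
have N_gt0 := INR_expn2_gt0 m.
have K1_gt0 := INR_card_gt0 (@vanishing_on0 'F_2 m S).
have K2_gt0 := INR_card_gt0 (introT setIP (conj (mx_kernel0 A) (@vanishing_on0 'F_2 m (~: S)))).
rewrite cards1 !card_cV_F2 !log2_div //; last exact: Rlt_0_1.
rewrite log2_expn2 [INR 1]/= log2_1.
(* The cardinals in the goal differ from those of the lemma only up to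
   conversion; [set] identifies them before [lra] sees them as atoms. *)
move: (log2_card_kernel_parts A S); set l1 := log2 _; set l2 := log2 _; lra.
Qed.

Theorem mainTheorem3 (T : finType) (r : {set T} -> nat) :
  is_matroid_rank r -> (binary_matroid r <-> bulmac_matroid r).
Proof.
move=> _; split=> -[k [n [B [f [f_bij r_eq]]]]]; exists k, n, B, f; split=> // X.
  by rewrite bulmac_rank_vec_rank r_eq.
by apply: INR_eq; rewrite -bulmac_rank_vec_rank r_eq.
Qed.
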